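(* Let $d\ge 2$ and $N\ge 2$ be integers, let $X=\{x^1,\dots,x^N\}\subseteq\mathbb{R}^d$, and let $C\subseteq\mathbb{R}^d$ be a proper closed convex cone. Then: (i) For every $w\in C^+\setminus\{0\}$, both $r_{X,w}$ and $r_{X,C}$ are ranking functions on $X$ with respect to $\leq_C$: for all $y,z\in X$, $y\leq_C z$ implies $r_{X,w}(y)\le r_{X,w}(z)$ and $r_{X,C}(y)\le r_{X,C}(z)$. Both are moreover strict: if $\operatorname{int} C\neq\varnothing$, then for all $y,z\in X$, $y<_C z$ implies $r_{X,w}(y)<r_{X,w}(z)$ and $r_{X,C}(y)<r_{X,C}(z)$. (ii) For every invertible matrix $A\in\mathbb{R}^{d\times d}$ and every $b\in\mathbb{R}^d$, $$\forall z\in\mathbb{R}^d:\quad r_{AX+b,\,AC}(Az+b)=r_{X,C}(z),$$ where $AX+b=\{Ax^1+b,\dots,Ax^N+b\}$ and $AC=\{Ac\mid c\in C\}$. (iii) If $D\subseteq\mathbb{R}^d$ is a closed convex cone with $C\subseteq D$, then $r_{X,C}(z)\le r_{X,D}(z)$ for all $z\in\mathbb{R}^d$. In particular, $r_{X,C}(z)\le r_{X,H^+(w)}(z)$ for all $w\in C^+$ and all $z\in\mathbb{R}^d$.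
   Context: A proper closed convex cone $C\subseteq\mathbb{R}^d$ is a closed set with $sC=C$ for all $s\ge 0$, $C+C=C$, and $C\notin\{\varnothing,\mathbb{R}^d\}$. It induces the preorder $y\leq_C z$ iff $z-y\in C$, and (when $\operatorname{int} C\neq\varnothing$) $y<_C z$ iff $z-y\in\operatorname{int} C$. The dual cone of a cone $K$ is $K^+=\{v\in\mathbb{R}^d\mid \forall z\in K: v^\top z\ge 0\}$. For $w\in\mathbb{R}^d$, $H^+(w)=\{z\in\mathbb{R}^d\mid w^\top z\ge 0\}$ (so $H^+(0)=\mathbb{R}^d$). For a finite set $X\subseteq\mathbb{R}^d$, a nonzero $w$, and a closed convex cone $K$, define for $z\in\mathbb{R}^d$ $$r_{X,w}(z)=\#\{x\in X\mid x\in z-H^+(w)\}=\#\{x\in X\mid w^\top x\le w^\top z\},\qquad r_{X,K}(z)=\min_{w\in K^+}\#\{x\in X\mid x\in z-H^+(w)\},$$ where $\#$ denotes cardinality. A ranking function on $X$ with respect to $\leq_C$ is a map $r:X\to\mathbb{R}$ with $y\leq_C z\Rightarrow r(y)\le r(z)$ for $y,z\in X$; it is strict if $y<_C z\Rightarrow r(y)<r(z)$. *)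

(* Points of R^d are column vectors 'cV[R]_d,
   R : realType; topology on 'cV[R]_d is the library's (product/max-norm) one. *)
From HB Require Import structures.
From mathcomp Require Import all_boot all_order all_algebra.
From mathcomp Require Import all_classical all_reals all_analysis.
Set Implicit Arguments. Unset Strict Implicit. Unset Printing Implicit Defensive.
Import Order.TTheory GRing.Theory Num.Theory.
Import numFieldTopology.Exports numFieldNormedType.Exports.
Local Open Scope classical_set_scope.
Local Open Scope ring_scope.

Section Defs.
Variables (R : realType) (d : nat).
Notation vec := 'cV[R]_d.

Definition dotp (v z : vec) : R := \sum_(i < d) v i 0 * z i 0.

Definition closed_convex_cone (C : set vec) : Prop :=
  [/\ closed C, C !=set0,
      (forall s c, 0 <= s -> C c -> C (s *: c)) &
      (forall c1 c2, C c1 -> C c2 -> C (c1 + c2))].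

Definition proper_cone (C : set vec) : Prop :=
  closed_convex_cone C /\ C <> setT.

Definition cone_le (C : set vec) (y z : vec) : Prop := C (z - y).
Definition cone_lt (C : set vec) (y z : vec) : Prop := (interior C) (z - y).

Definition dual_cone (K : set vec) : set vec :=
  [set v | forall z, K z -> 0 <= dotp v z].

Definition halfspace (w : vec) : set vec := [set z | 0 <= dotp w z].

Definition mx_image (A : 'M[R]_d) (K : set vec) : set vec :=
  (fun c => A *m c) @` K.

Variable N : nat.
(* X = {x 1, ..., x N}, given by an (injective) enumeration x *)

Definition rank_w (x : 'I_N -> vec) (w z : vec) : nat :=
  #|[set i : 'I_N | dotp w (x i) <= dotp w z]|.

(* r_{X,K}(z) = min_{w in K^+} r_{X,w}(z); the counts lie in {0..N}, so this is
   the least n <= N attained by some w in K^+ (N is attained by w = 0). *)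
Definition rank_K (x : 'I_N -> vec) (K : set vec) (z : vec) : nat :=
  \big[minn/N]_(n < N.+1 |
      `[< exists w, dual_cone K w /\ rank_w x w z = n >]) (n : nat).

End Defs.

From HB Require Import structures.
From mathcomp Require Import all_boot all_order all_algebra.
From mathcomp Require Import all_classical all_reals all_analysis.
From mathcomp Require Import ring lra.

Set Implicit Arguments.
Unset Strict Implicit.
Unset Printing Implicit Defensive.
Import Order.TTheory GRing.Theory Num.Theory.
Import numFieldTopology.Exports numFieldNormedType.Exports.
Local Open Scope classical_set_scope.
Local Open Scope ring_scope.

(* Each count r_{X,w}(z) is monotone in w^T z, and r_{X,K}(z) is its minimum
   over w in K^+. If z - y lies in C, then w^T y <= w^T z for every w in C^+,
   strictly when z - y is interior and w <> 0; taking minima preserves both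
   inequalities (the minimiser w = 0 has the maximal count N). The affine map
   z |-> Az + b turns w^T z into (A^T w)^T z up to a common shift, and A^T is
   a bijection from (AC)^+ onto C^+, so the minima agree. Finally C <= D gives
   D^+ <= C^+, so the minimum over C^+ is the smaller one. *)

Section Dotp.
Variables (R : realType) (d : nat).
Notation vec := 'cV[R]_d.

Lemma dotpE (v z : vec) : dotp v z = (v^T *m z) 0 0.
Proof. by rewrite /dotp !mxE; apply: eq_bigr => i _; rewrite mxE. Qed.

Lemma dot0p (z : vec) : dotp 0 z = 0.
Proof. by rewrite /dotp big1 // => k _; rewrite mxE mul0r. Qed.

Lemma dotpDr (v y z : vec) : dotp v (y + z) = dotp v y + dotp v z.
Proof. by rewrite !dotpE mulmxDr mxE. Qed.

Lemma dotpBr (v y z : vec) : dotp v (y - z) = dotp v y - dotp v z.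
Proof. by rewrite !dotpE mulmxBr !mxE. Qed.

Lemma dotpZr (v z : vec) (t : R) : dotp v (t *: z) = t * dotp v z.
Proof. by rewrite !dotpE -scalemxAr mxE. Qed.

Lemma dotp_mulmxr (A : 'M[R]_d) (v z : vec) :
  dotp v (A *m z) = dotp (A^T *m v) z.
Proof. by rewrite !dotpE trmx_mul trmxK mulmxA. Qed.

Lemma dotp_gt0 (w : vec) : w != 0 -> 0 < dotp w w.
Proof.
move=> w_neq0; rewrite lt0r sumr_ge0 ?andbT => [|i _]; last by rewrite sqr_ge0.
apply: contra w_neq0 => /eqP/psumr_eq0P w2_eq0; apply/eqP/matrixP => i j.
rewrite (ord1 j) mxE; apply/eqP; rewrite -sqrf_eq0.
by apply/eqP/w2_eq0 => // k _; rewrite sqr_ge0.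
Qed.

End Dotp.

Section Cones.
Variables (R : realType) (d : nat).
Notation vec := 'cV[R]_d.
Implicit Types (K D : set vec) (w y z : vec).

Lemma dual_cone0 K : dual_cone K 0.
Proof. by move=> z _; rewrite dot0p. Qed.

Lemma dual_cone_sub K D : K `<=` D -> dual_cone D `<=` dual_cone K.
Proof. by move=> KD w Dw c /KD; apply: Dw. Qed.

Lemma dual_cone_mx_image (A : 'M[R]_d) K w :
  dual_cone (mx_image A K) w <-> dual_cone K (A^T *m w).
Proof.
split=> [Kw c Kc | Kw _ [c Kc <-]]; last by rewrite dotp_mulmxr; apply: Kw.
by rewrite -dotp_mulmxr; apply: Kw; exists c.
Qed.

Lemma cone_le_dotp K w y z :
  dual_cone K w -> cone_le K y z -> dotp w y <= dotp w z.
Proof. by move=> Kw /Kw; rewrite dotpBr subr_ge0. Qed.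

(* For small t > 0 the point c - t w is still in K, and
   0 <= w^T (c - t w) = w^T c - t |w|^2. *)
Lemma dual_cone_interior_gt0 K w c :
  dual_cone K w -> w != 0 -> interior K c -> 0 < dotp w c.
Proof.
move=> Kw w_neq0 /nbhs_ballP [e /= e0 ballK].
have w1_gt0 : 0 < `|w| + 1 by rewrite ltr_pwDr // normr_ge0.
pose t := e / (2 * (`|w| + 1)).
have t_gt0 : 0 < t by rewrite divr_gt0 // mulr_gt0.
have : ball c e (c - t *: w).
  rewrite -ball_normE /ball_ /= opprB addrC subrK normrZ gtr0_norm //.
  have -> : t * `|w| = e / 2 - t by rewrite /t; field; rewrite lt0r_neq0.
  lra.
move=> /ballK/Kw; rewrite dotpBr dotpZr subr_ge0.
exact/lt_le_trans/mulr_gt0/dotp_gt0.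
Qed.

Lemma cone_lt_dotp K w y z :
  dual_cone K w -> w != 0 -> cone_lt K y z -> dotp w y < dotp w z.
Proof.
by move=> Kw w_neq0 /(dual_cone_interior_gt0 Kw w_neq0); rewrite dotpBr subr_gt0.
Qed.

End Cones.

Section Ranks.
Variables (R : realType) (d N : nat).
Notation vec := 'cV[R]_d.
Implicit Types (x : 'I_N -> vec) (K D : set vec) (w y z : vec).

Lemma rank_wE x w z :
  rank_w x w z = #|[pred i | dotp w (x i) <= dotp w z]|.
Proof. by apply: eq_card => i; rewrite /in_mem /= /in_set asboolb. Qed.

Lemma rank_w_max x w z : (rank_w x w z <= N)%N.
Proof. by rewrite -[N in (_ <= N)%N]card_ord max_card. Qed.

Lemma rank_w0 x z : rank_w x 0 z = N.
Proof.
rewrite rank_wE -[RHS]card_ord; apply: eq_card => i.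
by rewrite !inE !dot0p lexx.
Qed.

Lemma rank_w_homo x w y z :
  dotp w y <= dotp w z -> (rank_w x w y <= rank_w x w z)%N.
Proof.
move=> le_yz; rewrite !rank_wE; apply/subset_leq_card/fintype.subsetP => i.
by rewrite !inE => /le_trans; apply.
Qed.

Lemma rank_w_strict x w y j :
  dotp w y < dotp w (x j) -> (rank_w x w y < rank_w x w (x j))%N.
Proof.
move=> lt_yj; rewrite !rank_wE; apply/proper_card/properP; split.
  apply/fintype.subsetP => i; rewrite !inE => /le_trans; apply.
  exact: ltW.
by exists j; rewrite !inE ?lexx // -ltNge.
Qed.

Lemma rank_w_affine x (A : 'M[R]_d) (b : vec) w z :
  rank_w (fun i => A *m x i + b) w (A *m z + b) = rank_w x (A^T *m w) z.
Proof.
by rewrite !rank_wE; apply: eq_card => i; rewrite !inE !dotpDr lerD2r !dotp_mulmxr.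
Qed.

Lemma rank_K_le_rank_w x K w z :
  dual_cone K w -> (rank_K x K z <= rank_w x w z)%N.
Proof.
move=> Kw; have rank_lt : (rank_w x w z < N.+1)%N by rewrite ltnS rank_w_max.
rewrite /rank_K -minEnat.
by apply: (@bigmin_le_cond _ _ _ N (Ordinal rank_lt)); apply/asboolP; exists w.
Qed.

Lemma rank_K_attained x K z :
  exists2 w, dual_cone K w & rank_w x w z = rank_K x K z.
Proof.
apply: (big_ind (fun n => exists2 w, dual_cone K w & rank_w x w z = n)).
- by exists 0; [apply: dual_cone0 | apply: rank_w0].
- by move=> m n Hm Hn; rewrite /minn; case: ifP.
- by move=> n /asboolP [w [Kw <-]]; exists w.
Qed.

Lemma leq_rank_K x K y x' K' z :
  (forall w', dual_cone K' w' ->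
     exists2 w, dual_cone K w & (rank_w x w y <= rank_w x' w' z)%N) ->
  (rank_K x K y <= rank_K x' K' z)%N.
Proof.
move=> dominated; have [w' K'w' <-] := rank_K_attained x' K' z.
have [w Kw le_w] := dominated w' K'w'.
exact: leq_trans (rank_K_le_rank_w x y Kw) le_w.
Qed.

Lemma ltn_rank_K x K y z w0 :
  dual_cone K w0 -> w0 != 0 ->
  (forall w, dual_cone K w -> w != 0 -> (rank_w x w y < rank_w x w z)%N) ->
  (rank_K x K y < rank_K x K z)%N.
Proof.
move=> Kw0 w0_neq0 lt_rank; have [w Kw <-] := rank_K_attained x K z.
have [->|w_neq0] := eqVneq w 0; last first.
  exact: leq_ltn_trans (rank_K_le_rank_w x y Kw) (lt_rank w Kw w_neq0).
rewrite rank_w0; apply: leq_ltn_trans (rank_K_le_rank_w x y Kw0) _.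
exact: leq_trans (lt_rank w0 Kw0 w0_neq0) (rank_w_max x w0 z).
Qed.

Lemma rank_K_homo x K y z :
  cone_le K y z -> (rank_K x K y <= rank_K x K z)%N.
Proof.
move=> le_yz; apply: leq_rank_K => w Kw; exists w => //.
exact/rank_w_homo/(cone_le_dotp Kw).
Qed.

Lemma rank_K_strict x K w0 y j :
  dual_cone K w0 -> w0 != 0 -> cone_lt K y (x j) ->
  (rank_K x K y < rank_K x K (x j))%N.
Proof.
move=> Kw0 w0_neq0 lt_yj; apply: ltn_rank_K Kw0 w0_neq0 _ => w Kw w_neq0.
exact/rank_w_strict/(cone_lt_dotp Kw w_neq0).
Qed.

Lemma rank_K_affine x K (A : 'M[R]_d) (b : vec) z :
  A \in unitmx ->
  rank_K (fun i => A *m x i + b) (mx_image A K) (A *m z + b) = rank_K x K z.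
Proof.
move=> A_unit; apply/eqP; rewrite eqn_leq; apply/andP; split.
  apply: leq_rank_K => w Kw; exists (invmx A^T *m w).
    by apply/dual_cone_mx_image; rewrite mulmxA mulmxV ?unitmx_tr ?mul1mx.
  by rewrite rank_w_affine mulmxA mulmxV ?unitmx_tr ?mul1mx.
apply: leq_rank_K => w /dual_cone_mx_image Kw; exists (A^T *m w) => //.
by rewrite rank_w_affine.
Qed.

Lemma rank_K_subcone x K D z :
  K `<=` D -> (rank_K x K z <= rank_K x D z)%N.
Proof.
by move=> KD; apply: leq_rank_K => w Dw; exists w => //; apply: dual_cone_sub Dw.
Qed.

End Ranks.

Theorem proposition2p2 (R : realType) (d N : nat) (x : 'I_N -> 'cV[R]_d)
  (C : set 'cV[R]_d) :
  (2 <= d)%N -> (2 <= N)%N -> injective x -> proper_cone C ->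
  (* (i) *)
  (forall w, dual_cone C w -> w != 0 ->
     (forall i j, cone_le C (x i) (x j) ->
        (rank_w x w (x i) <= rank_w x w (x j))%N /\
        (rank_K x C (x i) <= rank_K x C (x j))%N) /\
     (interior C !=set0 ->
      forall i j, cone_lt C (x i) (x j) ->
        (rank_w x w (x i) < rank_w x w (x j))%N /\
        (rank_K x C (x i) < rank_K x C (x j))%N)) /\
  (* (ii) *)
  (forall (A : 'M[R]_d) (b : 'cV[R]_d), A \in unitmx ->
     forall z : 'cV[R]_d,
       rank_K (fun i => A *m x i + b) (mx_image A C) (A *m z + b)
       = rank_K x C z) /\
  (* (iii) *)
  ((forall D : set 'cV[R]_d, closed_convex_cone D -> C `<=` D ->
      forall z, (rank_K x C z <= rank_K x D z)%N) /\
   (forall w, dual_cone C w ->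
      forall z, (rank_K x C z <= rank_K x (halfspace w) z)%N)).
Proof.
move=> _ _ _ _; split; [|split; [|split]].
- move=> w Cw w_neq0; split=> [i j le_ij | _ i j lt_ij]; split.
  + exact/rank_w_homo/(cone_le_dotp Cw).
  + exact: rank_K_homo.
  + exact/rank_w_strict/(cone_lt_dotp Cw w_neq0).
  + exact: rank_K_strict Cw w_neq0 lt_ij.
- by move=> A b A_unit z; apply: rank_K_affine.
- by move=> D _ CD z; apply: rank_K_subcone.
- by move=> w Cw z; apply: rank_K_subcone => c /Cw.
Qed.
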